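(* Let $\mathcal N_3$ be a simple 3-level network and let $\mathcal N_2$ be the simple 2-level network associated to it. Let $\mathcal U_3$ and $\mathcal U_2$ be the sets of edges incident with the sources of $\mathcal N_3$ and $\mathcal N_2$, respectively, and let $\mathbf A_{\mathcal N_3},\mathbf A_{\mathcal N_2}$ be adversaries able to corrupt up to $t$ edges of $\mathcal U_3$ and of $\mathcal U_2$, respectively. Then for every alphabet $\mathcal A$ and every positive integer $i$, \[C_i(\mathcal N_3,\mathcal A,\mathbf A_{\mathcal N_3})\le C_i(\mathcal N_2,\mathcal A,\mathbf A_{\mathcal N_2}).\]
   Context: An alphabet is a finite set $\mathcal A$ with $|\mathcal A|\ge2$. A simple 3-level network is a directed acyclic multigraph with a source $S$, a single terminal $T$, and intermediate nodes partitioned into $L_1,L_2$, such that every edge goes from $S$ to $L_1$, from $L_1$ to $L_2$, or from $L_2$ to $T$ (so every $S$–$T$ path has length 3), and every intermediate node lies on some $S$–$T$ path. Let $G^{3,2}$ be the (undirected) graph on $L_1\cup L_2$ whose edges are the edges of $\mathcal N_3$ between $L_1$ and $L_2$, with connected components $K_1,\dots,K_n$. The associated simple 2-level network $\mathcal N_2$ has source $S$, intermediate nodes $V_1,\dots,V_n$ (one per component), terminal $T$, $a_j$ parallel edges $S\to V_j$ and $b_j$ parallel edges $V_j\to T$, where $a_j$ (resp. $b_j$) is the number of edges of $\mathcal N_3$ from $S$ into $K_j$ (resp. from $K_j$ to $T$). In a network each edge carries one symbol of $\mathcal A$; a network code assigns to each intermediate node $V$ a function $\mathcal A^{\deg^-(V)}\to\mathcal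 A^{\deg^+(V)}$ mapping the symbols on its incoming edges to those on its outgoing edges. In one use, the source sends $x\in\mathcal A^{\deg^+(S)}$, the adversary may replace symbols on up to $t$ edges of the given vulnerable set by arbitrary symbols, and values propagate via the network code; the fan-out set $\Omega(x)$ is the set of all vectors the terminal can receive. For $i$ uses with the same network code, the fan-out set of $(x^1,\dots,x^i)$ is $\Omega(x^1)\times\dots\times\Omega(x^i)$. A nonempty code $C\subseteq(\mathcal A^{\deg^+(S)})^i$ is unambiguous if distinct codewords have disjoint fan-out sets, and $C_i$ is the maximum of $\log_{|\mathcal A|}(|C|)/i$ over network codes and unambiguous codes. *)

From Stdlib Require Import Reals.
From mathcomp Require Import all_boot.

Set Implicit Arguments.
Unset Strict Implicit.
Unset Printing Implicit Defensive.

(* Simple 3-level networks.  Nodes of L1, L2 and edges are finite types;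
   E1 : edges S -> L1,  E2 : edges L1 -> L2,  E3 : edges L2 -> T.       *)
Record net3 := Net3 {
  L1 : finType; L2 : finType;
  E1 : finType; E2 : finType; E3 : finType;
  h1 : E1 -> L1;
  t2 : E2 -> L1; h2 : E2 -> L2;
  t3 : E3 -> L2
}.

(* every intermediate node lies on some S--T path *)
Definition simple3 (N : net3) : Prop :=
  (forall v : L1 N, exists e1 e2 e3,
      h1 e1 = v /\ t2 e2 = v /\ t3 e3 = h2 e2) /\
  (forall w : L2 N, exists e1 e2 e3,
      h2 e2 = w /\ t3 e3 = w /\ h1 e1 = t2 e2).

(* Simple 2-level networks: intermediate nodes V, source edges E1 and
   terminal edges E3. *)
Record net2 := Net2 {
  V2 : finType; F1 : finType; F3 : finType;
  g1 : F1 -> V2; g3 : F3 -> V2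
}.

(* Adversary: corrupts at most t of the source edges. *)
Definition ball (E A : finType) (t : nat) (x : {ffun E -> A}) : {set {ffun E -> A}} :=
  [set y : {ffun E -> A} | #|[set e | y e != x e]| <= t].

Section Net3Codes.
Variables (N : net3) (A : finType).

Definition In1 (v : L1 N) := {e : E1 N | h1 e == v}.
Definition Out1 (v : L1 N) := {e : E2 N | t2 e == v}.
Definition In2 (w : L2 N) := {e : E2 N | h2 e == w}.
Definition Out2 (w : L2 N) := {e : E3 N | t3 e == w}.

Definition code3 : finType :=
  ({dffun forall v : L1 N, {ffun {ffun In1 v -> A} -> {ffun Out1 v -> A}}} *
   {dffun forall w : L2 N, {ffun {ffun In2 w -> A} -> {ffun Out2 w -> A}}})%type.

Definition run3 (F : code3) (y : {ffun E1 N -> A}) : {ffun E3 N -> A} :=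
  let z2 : {ffun E2 N -> A} :=
    [ffun e2 => F.1 (t2 e2) [ffun e : In1 (t2 e2) => y (val e)]
                    (exist _ e2 (eqxx (t2 e2)))] in
  [ffun e3 => F.2 (t3 e3) [ffun e : In2 (t3 e3) => z2 (val e)]
                  (exist _ e3 (eqxx (t3 e3)))].

Definition fanout3 (t : nat) (F : code3) (x : {ffun E1 N -> A}) : {set {ffun E3 N -> A}} :=
  [set run3 F y | y in ball t x].

Definition fanout3_i (t i : nat) (F : code3) (c : {ffun 'I_i -> {ffun E1 N -> A}})
  : {set {ffun 'I_i -> {ffun E3 N -> A}}} :=
  [set z : {ffun 'I_i -> {ffun E3 N -> A}} | [forall k, z k \in fanout3 t F (c k)]].

Definition unamb3 (t i : nat) (F : code3) (C : {set {ffun 'I_i -> {ffun E1 N -> A}}}) : bool :=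
  [forall c in C, forall c' in C,
     (c != c') ==> [disjoint fanout3_i t F c & fanout3_i t F c']].
End Net3Codes.

Section Net2Codes.
Variables (N : net2) (A : finType).

Definition In (v : V2 N) := {e : F1 N | g1 e == v}.
Definition Out (v : V2 N) := {e : F3 N | g3 e == v}.

Definition code2 : finType :=
  {dffun forall v : V2 N, {ffun {ffun In v -> A} -> {ffun Out v -> A}}}.

Definition run2 (F : code2) (y : {ffun F1 N -> A}) : {ffun F3 N -> A} :=
  [ffun e3 => F (g3 e3) [ffun e : In (g3 e3) => y (val e)]
                (exist _ e3 (eqxx (g3 e3)))].

Definition fanout2 (t : nat) (F : code2) (x : {ffun F1 N -> A}) : {set {ffun F3 N -> A}} :=
  [set run2 F y | y in ball t x].

Definition fanout2_i (t i : nat) (F : code2) (c : {ffun 'I_i -> {ffun F1 N -> A}})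
  : {set {ffun 'I_i -> {ffun F3 N -> A}}} :=
  [set z : {ffun 'I_i -> {ffun F3 N -> A}} | [forall k, z k \in fanout2 t F (c k)]].

Definition unamb2 (t i : nat) (F : code2) (C : {set {ffun 'I_i -> {ffun F1 N -> A}}}) : bool :=
  [forall c in C, forall c' in C,
     (c != c') ==> [disjoint fanout2_i t F c & fanout2_i t F c']].
End Net2Codes.

(* C_i = max over network codes F and nonempty unambiguous codes C of
   log_|A| |C| / i.  All candidate values are >= 0 and at least one
   candidate exists (a singleton code), so taking the iterated Rmax with
   default 0 gives exactly this maximum. *)
Local Open Scope R_scope.

Definition rate (A : finType) (i m : nat) : R :=
  ln (INR m) / (INR i * ln (INR #|A|)).

Definition Cap3 (N : net3) (A : finType) (t i : nat) : R :=
  \big[Rmax/0]_(F : code3 N A)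
    \big[Rmax/0]_(C : {set {ffun 'I_i -> {ffun E1 N -> A}}} |
                    (C != set0) && unamb3 t F C)
       rate A i #|C|.

Definition Cap2 (N : net2) (A : finType) (t i : nat) : R :=
  \big[Rmax/0]_(F : code2 N A)
    \big[Rmax/0]_(C : {set {ffun 'I_i -> {ffun F1 N -> A}}} |
                    (C != set0) && unamb2 t F C)
       rate A i #|C|.

Local Close Scope R_scope.

Section Assoc.
Variable N : net3.

Definition LNode : finType := (L1 N + L2 N)%type.

Definition G32 : rel LNode := fun a b =>
  [exists e : E2 N,
     ((a == inl (t2 e)) && (b == inr (h2 e))) ||
     ((b == inl (t2 e)) && (a == inr (h2 e)))].

Definition compset (x : LNode) : {set LNode} := [set y | connect G32 x y].

Definition Comp := {K : {set LNode} | [exists x, K == compset x]}.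

Lemma compset_is_comp (x : LNode) : [exists x', compset x == compset x'].
Proof. by apply/existsP; exists x. Qed.

Definition comp_of (x : LNode) : Comp := exist _ (compset x) (compset_is_comp x).

(* N2: one intermediate node per component; the a_j source edges into
   V_j are the source edges of N3 entering K_j, and the b_j terminal
   edges out of V_j are the edges of N3 from K_j to T. *)
Definition assoc2 : net2 :=
  @Net2 Comp (E1 N) (E3 N)
        (fun e => comp_of (inl (h1 e))) (fun e => comp_of (inr (t3 e))).
End Assoc.

From Pilot Require Import Defs.
From Stdlib Require Import Reals.
From mathcomp Require Import all_boot.

Set Implicit Arguments.
Unset Strict Implicit.
Unset Printing Implicit Defensive.

(* Every network code F on N3 is simulated by a network code on N2: the node
   V_j receives all source symbols entering the component K_j, which are the
   only source symbols that can influence the edges from K_j to T, so it can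
   compute those outputs by running F itself.  The two codes then have the
   same output for every (possibly corrupted) input, hence the same fan-out
   sets and the same unambiguous codes, and each candidate value of C_i on N3
   is also a candidate on N2. *)

Section RmaxBig.
Local Open Scope R_scope.

Lemma bigRmax_ge0 (I : Type) (r : seq I) (P : pred I) (f : I -> R) :
  0 <= \big[Rmax/0]_(k <- r | P k) f k.
Proof.
elim: r => [|a r IHr]; first by rewrite big_nil; apply: Rle_refl.
by rewrite big_cons; case: (P a) => //; apply: Rle_trans IHr (Rmax_r _ _).
Qed.

Lemma le_bigRmax (I : eqType) (r : seq I) (P : pred I) (f : I -> R) (j : I) :
  j \in r -> P j -> f j <= \big[Rmax/0]_(k <- r | P k) f k.
Proof.
elim: r => //= a r IHr; rewrite inE big_cons => /orP[/eqP-> -> | jr Pj].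
  exact: Rmax_l.
by case: (P a); [apply: Rle_trans (IHr jr Pj) (Rmax_r _ _) | apply: IHr].
Qed.

Lemma bigRmax_le (I : Type) (r : seq I) (P : pred I) (f : I -> R) (b : R) :
  0 <= b -> (forall k, P k -> f k <= b) -> \big[Rmax/0]_(k <- r | P k) f k <= b.
Proof.
move=> b_ge0 fP_le; elim: r => [|a r IHr]; first by rewrite big_nil.
by rewrite big_cons; case Pa: (P a) => //; apply: Rmax_lub => //; apply: fP_le.
Qed.

Lemma bigRmax_le_map (I J : finType) (f : I -> R) (g : J -> R) (phi : I -> J) :
  (forall k, f k <= g (phi k)) -> \big[Rmax/0]_k f k <= \big[Rmax/0]_j g j.
Proof.
move=> le_fg; apply: bigRmax_le => [|k _]; first exact: bigRmax_ge0.
exact: Rle_trans (le_fg k) (le_bigRmax _ (mem_index_enum _) isT).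
Qed.

End RmaxBig.

Section Simulation.
Variables (N : net3) (A : finType) (a0 : A).

Local Notation N2 := (assoc2 N).

Lemma G32_sym : symmetric (@G32 N).
Proof. by move=> a b; apply/existsP/existsP => -[e He]; exists e; rewrite orbC. Qed.

Lemma comp_of_E2 (e2 : E2 N) : comp_of (inl (t2 e2)) = comp_of (N := N) (inr (h2 e2)).
Proof.
apply: val_inj; apply/setP => z; rewrite !inE.
apply: same_connect; first exact: sym_connect_sym G32_sym.
by apply: connect1; apply/existsP; exists e2; rewrite !eqxx.
Qed.

Lemma run3_local (F : code3 N A) (y y' : {ffun Defs.E1 N -> A}) (e3 : E3 N) :
  (forall e1, comp_of (inl (h1 e1)) = comp_of (N := N) (inr (t3 e3)) -> y e1 = y' e1) ->
  run3 F y e3 = run3 F y' e3.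
Proof.
move=> eq_yy'; rewrite !ffunE; congr (F.2 _ _ _).
apply/ffunP => -[e2 he2]; rewrite !ffunE; congr (F.1 _ _ _).
apply/ffunP => -[e1 he1]; rewrite !ffunE eq_yy' //=.
by rewrite (eqP he1) comp_of_E2 (eqP he2).
Qed.

Definition extend_input (K : V2 N2) (u : {ffun In K -> A}) : {ffun Defs.E1 N -> A} :=
  [ffun e1 => if insub e1 is Some e then u e else a0].

Definition code2_of_code3 (F : code3 N A) : code2 N2 A :=
  [ffun K : V2 N2 => [ffun u : {ffun In K -> A} =>
    [ffun o : Out K => run3 F (extend_input u) (val o)]]].

Lemma run2_code2_of_code3 (F : code3 N A) (y : {ffun Defs.E1 N -> A}) :
  run2 (code2_of_code3 F) y = run3 F y.
Proof.
apply/ffunP => e3; rewrite ffunE 3!ffunE.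
apply: run3_local => e1 same_comp.
rewrite ffunE; case: insubP => [e _ <- | ]; first by rewrite ffunE.
by rewrite /= same_comp eqxx.
Qed.

Lemma fanout2_code2_of_code3 (F : code3 N A) (t : nat) (x : {ffun Defs.E1 N -> A}) :
  fanout2 t (code2_of_code3 F) x = fanout3 t F x.
Proof. by apply: eq_imset => y; rewrite run2_code2_of_code3. Qed.

Lemma unamb2_code2_of_code3 (F : code3 N A) (t i : nat)
    (C : {set {ffun 'I_i -> {ffun Defs.E1 N -> A}}}) :
  unamb2 t (code2_of_code3 F) C = unamb3 t F C.
Proof.
have fanout_i_eq c : fanout2_i t (code2_of_code3 F) c = fanout3_i t F c.
  by apply: eq_finset => z; apply: eq_forallb => k; rewrite fanout2_code2_of_code3.
apply: eq_forallb => c; congr (_ ==> _); apply: eq_forallb => c'.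
by rewrite !fanout_i_eq.
Qed.

End Simulation.

Theorem mainTheorem5 (N : net3) (HN : simple3 N) (A : finType) (HA : 1 < #|A|)
  (t i : nat) (Hi : 0 < i) :
  Rle (Cap3 N A t i) (Cap2 (assoc2 N) A t i).
Proof.
have /card_gt0P[a0 _] := ltnW HA.
apply: (bigRmax_le_map (phi := code2_of_code3 a0)) => F; apply: Req_le.
by apply: eq_bigl => C; rewrite unamb2_code2_of_code3.
Qed.
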